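(* Let $G$ be a finite group with $|G| = qp^k$, where $p < q$ are primes and $k \geq 1$, and suppose $m^*(G) = |G|$. Let $N$ be a minimal normal subgroup of $G$. Then $|N| = p^n$ for some $n \geq 1$ and $|G/C_G(N)| = qp^r$ for some $r \geq 1$ with $p^n < qp^r$. Furthermore, a Sylow $q$-subgroup of $G/C_G(N)$ acts irreducibly on $N$ (viewed as an $n$-dimensional vector space over $GF(p)$, with $G/C_G(N)$ acting by conjugation).
   Context: For $H \leq G$, $m_G(H) = |H|\,|C_G(H)|$ and $m^*(G) = \max\{ m_G(H) : H \leq G\}$. *)

From mathcomp Require Import all_boot all_fingroup all_solvable.
Set Implicit Arguments. Unset Strict Implicit. Unset Printing Implicit Defensive.
Local Open Scope group_scope.

Definition mG (gT : finGroupType) (G H : {set gT}) : nat := #|H| * #|'C_G(H)|.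

Definition mstar (gT : finGroupType) (G : {set gT}) : nat :=
  \max_(H : {group gT} | H \subset G) mG G H.

(* Since m*(G) = |G|, every H <= G satisfies |H| |C_G(H)| <= |G|; in particular
   Z(G) = 1.  By Burnside's p^a q^b theorem G is solvable, so N is elementary
   abelian; it cannot be a q-group (then |G : C_G(N)| < q), so it is a p-group.
   Any subgroup centralized both by a Sylow p-subgroup and by a q-element is
   central, hence trivial; this forces C_G(N) to be a p-group, equal to O_p(G).
   So K = G/C_G(N) has order q p^r and O_p(K) = 1, which makes its Sylow
   q-subgroup Q normal and self-centralizing, whence |K| < q^2.  Meanwhile
   |N| |C_G(N)| <= |G| gives |N| < |K|.  Finally Q fixes no nontrivial element
   of N, so every Q-invariant subgroup of N has order 1 mod q, and a proper
   nontrivial one would give |N| > q^2 > |K|. *)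

From mathcomp Require Import all_boot all_fingroup all_solvable.
From mathcomp Require integral_char.
From mathcomp Require Import zify.
Set Implicit Arguments. Unset Strict Implicit. Unset Printing Implicit Defensive.
Local Open Scope group_scope.

Lemma mG_le_mstar (gT : finGroupType) (G H : {group gT}) :
  H \subset G -> mG G H <= mstar G.
Proof. by move=> sHG; apply: (@leq_bigmax_cond _ _ (fun H : {group gT} => mG G H)). Qed.

Lemma mstar_card_subcent (gT : finGroupType) (G H : {group gT}) :
  mstar G = #|G| -> H \subset G -> (#|H| * #|'C_G(H)| <= #|G|)%N.
Proof. by move=> mstarG sHG; rewrite -mstarG mG_le_mstar. Qed.

Lemma mstar_center1 (gT : finGroupType) (G : {group gT}) :
  mstar G = #|G| -> 'Z(G) = 1.
Proof.
move=> mstarG; have := mstar_card_subcent mstarG (subxx G).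
by rewrite -{2}[#|G|]muln1 leq_pmul2l // => /card_le1_trivg.
Qed.

Lemma trivg_subcent_full (gT : finGroupType) (G W : {group gT}) :
  'Z(G) = 1 -> W \subset G -> #|G| %| #|'C_G(W)| -> W :=: 1.
Proof.
move=> Z1 sWG dGC; have eCG : 'C_G(W) = G.
  by apply/eqP; rewrite eqEcard subsetIl dvdn_leq.
by apply/trivgP; rewrite -Z1 subsetI sWG centsC -eCG subsetIr.
Qed.

Lemma index_subcent_prime_lt (gT : finGroupType) (A H : {group gT}) :
  prime #|A| -> H \subset 'N(A) -> #|H : 'C_H(A)| < #|A|.
Proof.
move=> prA nAH; have cycA := prime_cyclic prA.
have := subset_leq_card (Aut_conj_aut A H).
rewrite card_morphim ker_conj_aut (setIidPr nAH) -indexgI card_Aut_cyclic //.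
by rewrite totient_prime // => /leq_ltn_trans; apply; rewrite prednK ?prime_gt0.
Qed.

Lemma card_meet_cent1_mod (gT : finGroupType) (A M : {group gT}) (q : nat) :
  q.-group A -> A \subset 'N(M) -> M :&: 'C(A) = 1 -> #|M| = 1 %[mod q].
Proof.
move=> qA nMA tiMC; have actA : [acts A, on M | 'J] by rewrite astabsJ.
by rewrite (pgroup_fix_mod qA actA) afixJ tiMC cards1.
Qed.

Lemma gt_of_mod1 (a q : nat) : 1 < q -> 1 < a -> a = 1 %[mod q] -> q < a.
Proof.
move=> q_gt1 a_gt1; rewrite (modn_small q_gt1) => aq.
have := divn_eq a q; rewrite aq; case: (a %/ q) => [|d]; nia.
Qed.

Lemma prime_dvd_mul_expn (p q r k : nat) :
  prime p -> prime q -> prime r -> (r %| q * p ^ k)%N -> r = p \/ r = q.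
Proof.
move=> pr_p pr_q pr_r; rewrite Euclid_dvdM // Euclid_dvdX // !dvdn_prime2 //.
by case/orP=> [/eqP|/andP[/eqP]]; [right|left].
Qed.

Lemma solvable_card_mul_expn (gT : finGroupType) (G : {group gT}) (p q k : nat) :
  prime p -> prime q -> #|G| = (q * p ^ k)%N -> solvable G.
Proof.
move=> pr_p pr_q oG; apply: integral_char.Burnside_p_a_q_b.
rewrite -[2]/(size [:: p; q]) uniq_leq_size ?primes_uniq // => r.
rewrite mem_primes oG => /and3P[pr_r _ /(prime_dvd_mul_expn pr_p pr_q pr_r)].
by rewrite !inE => -[] ->; rewrite eqxx ?orbT.
Qed.

Lemma partn_mul_expn (p q k : nat) : prime p -> prime q -> p != q ->
  ((q * p ^ k)`_p = p ^ k /\ (q * p ^ k)`_q = q)%N.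
Proof.
move=> pr_p pr_q npq; have pk_gt0 : (0 < p ^ k)%N by rewrite expn_gt0 prime_gt0.
rewrite !p_part !lognM ?pk_gt0 ?prime_gt0 // pfactorK // lognX.
rewrite !logn_prime // eqxx (negbTE npq) eq_sym (negbTE npq).
by rewrite muln0 addn0 expn1.
Qed.

Lemma card_lt_square_pcore1 (gT : finGroupType) (K Q : {group gT}) (p q m : nat) :
  prime p -> prime q -> #|K| = (q * p ^ m)%N -> Q <| K -> #|Q| = q -> 'O_p(K) = 1 ->
  (#|K| < q * q)%N.
Proof.
move=> pr_p pr_q oK /andP[sQK nQK] oQ Op1.
have q_gt0 := prime_gt0 pr_q.
set X := 'C_K(Q)%G.
have sXK : X \subset K := subsetIl K _.
have nsXK : X <| K by rewrite /normal sXK normsI ?normG ?norms_cent.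
have sQX : Q \subset X.
  by rewrite subsetI sQK; apply: cyclic_abelian; rewrite prime_cyclic ?oQ.
have sQZ : Q \subset 'Z(X) by rewrite subsetI sQX centsC subsetIr.
have iKQ : #|K : Q| = (p ^ m)%N.
  by apply/eqP; rewrite -(eqn_pmul2l q_gt0) -{1}oQ Lagrange // oK.
have pXZ : p.-group (X / 'Z(X)).
  rewrite /pgroup card_quotient ?normal_norm ?center_normal //.
  apply: pnat_dvd (dvdn_trans (indexgS X sQZ) (indexSg sQX sXK)) _.
  by rewrite iKQ pnatX pnat_id.
have nilX : nilpotent X by rewrite -quotient_center_nil (pgroup_nil pXZ).
have OpX1 : 'O_p(X) :=: 1.
  apply/trivgP; rewrite -Op1 pcore_max ?pcore_pgroup //.
  exact: char_normal_trans (pcore_char _ _) nsXK.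
have p'X : p^'.-group X.
  have /and3P[_ _] := nilpotent_pcore_Hall p nilX.
  by rewrite OpX1 indexg1.
have leXq : (#|X| <= q)%N.
  apply: (dvdn_leq q_gt0); rewrite -(@Gauss_dvdl _ _ (p ^ m)) -?oK ?cardSg //.
  by rewrite (p'nat_coprime p'X) // pnatX pnat_id.
have ltKXq : (#|K : X| < q)%N by rewrite -oQ index_subcent_prime_lt ?oQ.
by rewrite -(Lagrange sXK); nia.
Qed.

Section MinimalNormalSubgroup.

Variables (gT : finGroupType) (G N : {group gT}) (p q k : nat).
Hypotheses (pr_p : prime p) (pr_q : prime q) (lt_pq : (p < q)%N).
Hypotheses (oG : #|G| = (q * p ^ k)%N) (mstarG : mstar G = #|G|).
Hypotheses (nsNG : N <| G) (minN : minnormal N G).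

Let sNG : N \subset G := normal_sub nsNG.
Let nNG : G \subset 'N(N) := normal_norm nsNG.
Let solG : solvable G := solvable_card_mul_expn pr_p pr_q oG.
Let ntN : N :!=: 1.
Proof. by have [] := minnormal_solvable minN sNG solG. Qed.
Let neq_pq : p != q.
Proof. by rewrite neq_ltn lt_pq. Qed.
Let q'p : q^'.-nat p.
Proof. by rewrite pnatE // !inE neq_pq. Qed.

Lemma minnormal_abelem : p.-abelem N.
Proof.
have [_ _ /is_abelemP[r pr_r abelN]] := minnormal_solvable minN sNG solG.
have rN := abelem_pgroup abelN; have [_ dvd_r_N _] := pgroup_pdiv rN ntN.
have dvd_r_G : (r %| q * p ^ k)%N by rewrite -oG (dvdn_trans dvd_r_N) ?cardSg.
have [<- //|r_q] := prime_dvd_mul_expn pr_p pr_q pr_r dvd_r_G.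
rewrite {}r_q {abelN} in rN; exfalso.
have oN : #|N| = q.
  have dvd_N_q : (#|N| %| q)%N.
    rewrite -(@Gauss_dvdl _ _ (p ^ k)) -?oG ?cardSg //.
    by rewrite (pnat_coprime rN) ?pnatX ?q'p.
  by apply/eqP; rewrite -(prime_nt_dvdP pr_q _ dvd_N_q) // -trivg_card1.
have ltGCq : (#|G : 'C_G(N)| < q)%N by rewrite -oN index_subcent_prime_lt ?oN.
have := mstar_card_subcent mstarG sNG.
have := cardG_gt0 'C_G(N).
by rewrite oN -(Lagrange (subsetIl G 'C(N))) /=; nia.
Qed.

Let nCG : G \subset 'N('C_G(N)).
Proof. by rewrite normsI ?normG ?norms_cent. Qed.
Let nsCG : 'C_G(N) <| G.
Proof. by rewrite /normal subsetIl nCG. Qed.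
Let Z1 : 'Z(G) = 1 := mstar_center1 mstarG.
Let pN : p.-group N := abelem_pgroup minnormal_abelem.

Lemma card_cent_minnormal_dvd : (#|'C_G(N)| %| p ^ k)%N.
Proof.
(* If q divides |C_G(N)|, the nontrivial subgroup N :&: 'Z(P), for P a Sylow
   p-subgroup, would be centralized by a subgroup of order divisible by |G|. *)
rewrite -(@Gauss_dvdr _ q) -?oG ?cardSg ?subsetIl // coprime_sym prime_coprime //.
apply/negP=> q_dvd_C; have [P sylP] := Sylow_exists p G.
have [sPG pP _] := and3P sylP.
have sNP := normal_sub_max_pgroup (Hall_max sylP) pN nsNG.
case/negP: (meet_center_nil (pgroup_nil pP) (normalS sNP sPG nsNG) ntN).
apply/eqP/(trivg_subcent_full Z1); first by rewrite subIset ?sNG.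
have [oP _] := partn_mul_expn k pr_p pr_q neq_pq.
have cop_pk_q : coprime (p ^ k) q by rewrite coprimeXl // prime_coprime // dvdn_prime2.
rewrite oG mulnC Gauss_dvd //; apply/andP; split.
  rewrite -oP -oG -(card_Hall sylP) cardSg // subsetI sPG centsC.
  by rewrite /= subIset // subsetIr orbT.
apply: dvdn_trans q_dvd_C (cardSg _).
by rewrite setIS // centS // subsetIl.
Qed.

Lemma pgroup_cent_minnormal : p.-group 'C_G(N).
Proof. by rewrite /pgroup (pnat_dvd card_cent_minnormal_dvd) // pnatX pnat_id. Qed.

Local Notation c := (logn p #|'C_G(N)|).

Lemma logn_cent_minnormal_le : (c <= k)%N.
Proof.
rewrite -(dvdn_Pexp2l _ _ (prime_gt1 pr_p)) -card_pgroup //.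
  exact: card_cent_minnormal_dvd.
exact: pgroup_cent_minnormal.
Qed.

Lemma card_quotient_cent : #|G / 'C_G(N)| = (q * p ^ (k - c))%N.
Proof.
apply/eqP; rewrite card_quotient // -(eqn_pmul2l (cardG_gt0 'C_G(N))).
rewrite Lagrange ?subsetIl // oG {1}(card_pgroup pgroup_cent_minnormal) mulnCA.
by rewrite -expnD subnKC ?logn_cent_minnormal_le.
Qed.

Lemma cent_minnormal_pcore : 'C_G(N) = 'O_p(G).
Proof.
apply/eqP; rewrite eqEsubset pcore_max ?pgroup_cent_minnormal //=.
have nsOG := pcore_normal p G; have sNO := pcore_max pN nsNG.
have nsNO := normalS sNO (pcore_sub p G) nsNG.
have ntNZ := meet_center_nil (pgroup_nil (pcore_pgroup p G)) nsNO ntN.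
have nZG : G \subset 'N('Z('O_p(G))).
  by rewrite normal_norm ?(char_normal_trans (center_char _)).
have /setIidPl sNZ : N :&: 'Z('O_p(G)) = N.
  by apply: (mingroupP minN).2; rewrite ?subsetIl // ntNZ normsI.
rewrite subsetI pcore_sub centsC (subset_trans sNZ) //.
by rewrite /center subsetIr.
Qed.

Lemma pcore_quotient_cent : 'O_p(G / 'C_G(N)) = 1.
Proof. by rewrite cent_minnormal_pcore trivg_pcore_quotient. Qed.

Lemma card_minnormal_lt : (#|N| < #|G / 'C_G(N)|)%N.
Proof.
have q_ndvd_N : ~~ (q %| #|N|)%N.
  by rewrite -prime_coprime // coprime_sym (pnat_coprime pN) // pnatE // !inE eq_sym.
rewrite ltn_neqAle; apply/andP; split.
  by apply: contraNneq q_ndvd_N => ->; rewrite card_quotient_cent dvdn_mulr.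
have := mstar_card_subcent mstarG sNG.
rewrite card_quotient // -(Lagrange (subsetIl G 'C(N))) mulnC /=.
by rewrite leq_pmul2l ?cardG_gt0.
Qed.

Lemma logn_cent_minnormal_lt : (c < k)%N.
Proof.
(* Otherwise |N| < |G : C_G(N)| = q, yet an element of order q acts on N
   fixing only 1, so that |N| = 1 mod q. *)
rewrite ltn_neqAle logn_cent_minnormal_le andbT; apply/eqP=> c_eq_k.
have q_dvd_G : (q %| #|G|)%N by rewrite oG dvdn_mulr.
have [x Gx ox] := Cauchy pr_q q_dvd_G.
have qX : q.-group <[x]> by rewrite /pgroup -orderE ox pnat_id.
have tiNCx : N :&: 'C(<[x]>) = 1.
  apply: (trivg_subcent_full Z1); first by rewrite subIset ?sNG.
  have cop_q_pk : coprime q (p ^ k).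
    by rewrite coprimeXr // prime_coprime // dvdn_prime2 // eq_sym.
  rewrite oG Gauss_dvd //; apply/andP; split.
    by rewrite -ox orderE cardSg // subsetI cycle_subG Gx centsC subsetIr.
  rewrite -c_eq_k -card_pgroup ?pgroup_cent_minnormal // cardSg //.
  by rewrite setIS // centS // subsetIl.
have nNx : <[x]> \subset 'N(N) by rewrite cycle_subG (subsetP nNG).
have oK : #|G / 'C_G(N)| = q by rewrite card_quotient_cent c_eq_k subnn muln1.
have := card_minnormal_lt; rewrite oK ltnNge => /negP; apply.
apply: ltnW (gt_of_mod1 (prime_gt1 pr_q) _ (card_meet_cent1_mod qX nNx tiNCx)).
by rewrite cardG_gt1.
Qed.

Section SylowQuotient.

Variable Q : {group coset_of 'C_G(N)}.
Hypothesis sylQ : q.-Sylow(G / 'C_G(N)) Q.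

Lemma card_Sylow_quotient_cent : #|Q| = q.
Proof.
rewrite (card_Hall sylQ) card_quotient_cent.
by have [_ ->] := partn_mul_expn (k - c) pr_p pr_q neq_pq.
Qed.

Lemma Sylow_quotient_cent_normal : Q <| G / 'C_G(N).
Proof.
set K := G / 'C_G(N).
have ntK : K != 1.
  rewrite -cardG_gt1 card_quotient_cent (leq_trans (prime_gt1 pr_q)) //.
  by rewrite leq_pmulr // expn_gt0 prime_gt0.
have [Y minY sYK] : {Y : {group coset_of 'C_G(N)} | minnormal Y K & Y \subset K}.
  by apply: mingroup_exists; rewrite ntK normG.
have [nYK ntY /is_abelemP[r pr_r /abelem_pgroup rY]] :=
  minnormal_solvable minY sYK (quotient_sol _ solG).
have nsYK : Y <| K by rewrite /normal sYK.
have [_ dvd_r_Y _] := pgroup_pdiv rY ntY.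
have dvd_r_K : (r %| q * p ^ (k - c))%N.
  by rewrite -card_quotient_cent (dvdn_trans dvd_r_Y) ?cardSg.
have [r_p|r_q] := prime_dvd_mul_expn pr_p pr_q pr_r dvd_r_K.
  by case/negP: ntY; rewrite -subG1 -pcore_quotient_cent pcore_max -?r_p.
rewrite {}r_q in rY.
have sYQ : Y \subset Q := normal_sub_max_pgroup (Hall_max sylQ) rY nsYK.
suff -> : Q :=: Y by [].
apply/eqP; rewrite eq_sym eqEcard sYQ card_Sylow_quotient_cent.
have dvd_Y_q : (#|Y| %| q)%N by rewrite -card_Sylow_quotient_cent cardSg.
have nY1 : #|Y| != 1%N by rewrite -trivg_card1.
by rewrite (prime_nt_dvdP pr_q nY1 dvd_Y_q) /=.
Qed.

End SylowQuotient.

Lemma card_quotient_cent_lt : (#|G / 'C_G(N)| < q * q)%N.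
Proof.
have [Q sylQ] := Sylow_exists q [group of G / 'C_G(N)].
apply: card_lt_square_pcore1 pr_p pr_q card_quotient_cent _ _ pcore_quotient_cent.
  exact: Sylow_quotient_cent_normal sylQ.
exact: card_Sylow_quotient_cent sylQ.
Qed.

Section SylowAction.

Variable Q : {group coset_of 'C_G(N)}.
Hypothesis sylQ : q.-Sylow(G / 'C_G(N)) Q.

Lemma minnormal_meet_cent_cosetpre : N :&: 'C(coset 'C_G(N) @*^-1 Q) = 1.
Proof.
set Q0 := coset _ @*^-1 Q.
have nsQ0 : Q0 <| G.
  by rewrite -(quotientGK nsCG) cosetpre_normal Sylow_quotient_cent_normal.
apply/eqP; apply: contraT => ntW.
have /setIidPl : N :&: 'C(Q0) = N.
  by apply: (mingroupP minN).2; rewrite ?subsetIl // ntW normsI ?norms_cent ?normal_norm.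
rewrite centsC => cNQ0.
have /subset_leq_card : Q0 \subset 'C_G(N) by rewrite subsetI normal_sub.
rewrite card_cosetpre card_Sylow_quotient_cent // -{2}(muln1 #|_|) leq_pmul2l //.
by rewrite leqNgt (prime_gt1 pr_q).
Qed.

Lemma card_invariant_minnormal_mod (M : {group gT}) :
  M \subset N -> [acts Q, on M | 'J %% 'C_G(N)] -> #|M| = 1 %[mod q].
Proof.
move=> sMN actM.
have cMC : 'C_G(N) \subset 'C(M | 'J) by rewrite astabJ subIset // centS ?orbT.
rewrite (pgroup_fix_mod (pHall_pgroup sylQ) actM) -{1}(cosetpreK Q) afix_mod //.
  rewrite afixJ (_ : M :&: _ = 1) ?cards1 //.
  by apply/trivgP; rewrite -minnormal_meet_cent_cosetpre setSI.
by rewrite subsetI subsetT morphpre_sub.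
Qed.

Lemma acts_irreducibly_Sylow_quotient_cent : acts_irreducibly Q N ('J %% 'C_G(N)).
Proof.
have actN : [acts Q, on N | 'J %% 'C_G(N)].
  rewrite astabs_mod ?astabJ ?subsetIr // astabsJ.
  exact: subset_trans (pHall_sub sylQ) (quotientS _ nNG).
apply/mingroupP; split; first by rewrite ntN actN.
move=> M /andP[ntM actM] sMN; apply/eqP; apply: contraT => neMN.
have oM := card_invariant_minnormal_mod sMN actM.
have oNM := card_invariant_minnormal_mod (subxx N) actN.
rewrite -(Lagrange sMN) -modnMml oM modnMml mul1n in oNM.
have q_gt1 := prime_gt1 pr_q.
have lt_q_M : (q < #|M|)%N by apply: gt_of_mod1 q_gt1 _ oM; rewrite cardG_gt1.
have lt_q_NM : (q < #|N : M|)%N.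
  apply: gt_of_mod1 q_gt1 _ oNM; rewrite indexg_gt1.
  by apply: contra neMN => sNM; rewrite eqEsubset sMN.
have := ltn_trans card_minnormal_lt card_quotient_cent_lt.
by rewrite -(Lagrange sMN) ltnNge ltnW ?ltn_mul.
Qed.

End SylowAction.

End MinimalNormalSubgroup.

Theorem proposition8 (gT : finGroupType) (G N : {group gT}) (p q k : nat) :
  prime p -> prime q -> p < q -> 1 <= k ->
  #|G| = (q * p ^ k)%N ->
  mstar G = #|G| ->
  N <| G -> minnormal N G ->
  (exists n, 1 <= n /\ #|N| = (p ^ n)%N /\
     exists r, 1 <= r /\ #|G / 'C_G(N)| = (q * p ^ r)%N /\ (p ^ n < q * p ^ r)%N) /\
  (forall Q : {group coset_of 'C_G(N)}, Q \in 'Syl_q(G / 'C_G(N)) ->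
     acts_irreducibly Q N ('J %% 'C_G(N))%gact).
Proof.
move=> pr_p pr_q lt_pq _ oG mstarG nsNG minN.
split=> [|Q]; last first.
  rewrite inE; exact: acts_irreducibly_Sylow_quotient_cent pr_p pr_q lt_pq
                                                         oG mstarG nsNG minN Q.
have pN := abelem_pgroup (minnormal_abelem pr_p pr_q lt_pq oG mstarG nsNG minN).
have /mingroupP[/andP[ntN _] _] := minN.
have oK := card_quotient_cent pr_p pr_q lt_pq oG mstarG nsNG minN.
exists (logn p #|N|); rewrite -(card_pgroup pN); split.
  by rewrite lt0n; apply: contraNneq ntN => n0; rewrite trivg_card1 (card_pgroup pN) n0.
split=> //; exists (k - logn p #|'C_G(N)|); rewrite -oK subn_gt0.
rewrite (logn_cent_minnormal_lt pr_p pr_q lt_pq oG mstarG nsNG minN); do 2!split=> //.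
exact: card_minnormal_lt pr_p pr_q lt_pq oG mstarG nsNG minN.
Qed.
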